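(* Let $\mathcal{C} \subseteq \mathcal{L}(M_n)$ be a right-CP-invariant convex cone. Then for a linear map $\Psi: M_n\to M_n$, we have $\Psi^{\dagger} \circ \Phi \in \mathcal{CP}(M_n)$ for all $\Phi \in \mathcal{C}$ if and only if $\Psi \in \mathcal{C}^{\circ}$.
   Context: $M_n$ is the space of $n\times n$ complex matrices, $\mathcal{L}(M_n)$ the space of linear maps $M_n\to M_n$, and $\mathcal{CP}(M_n)$ the cone of completely positive maps on $M_n$. For $\Phi\in\mathcal L(M_n)$, $\Phi^\dagger$ is the linear map with $\mathrm{Tr}(\Phi(X)Y)=\mathrm{Tr}(X\Phi^\dagger(Y))$ for all $X,Y\in M_n$. With $\{\mathbf e_i\}$ the standard basis of $\mathbb{C}^n$ and $E=\sum_{i,j=1}^n \mathbf e_i\mathbf e_j^*\otimes\mathbf e_i\mathbf e_j^*$, the Choi matrix of $\Phi$ is $C_\Phi = (\mathrm{id}_n\otimes\Phi)(E)$. The dual cone of a cone $\mathcal C\subseteq\mathcal L(M_n)$ is $\mathcal{C}^\circ = \{\Psi\in\mathcal L(M_n) : \mathrm{Tr}(C_\Phi C_\Psi)\ge 0 \text{ for all }\Phi\in\mathcal C\}$. A cone $\mathcal C\subseteq\mathcal L(M_n)$ is right-CP-invariant if $\Omega\circ\Psi\in\mathcal C$ whenever $\Omega\in\mathcal C$ and $\Psi\in\mathcal{CP}(M_n)$. *)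

(* Complex numbers are modelled by algC (algebraic complex
   numbers, a numClosedFieldType); M_n is 'M[algC]_n. *)
From HB Require Import structures.
From mathcomp Require Import all_boot all_order all_algebra.
From mathcomp Require Import algC.
Set Implicit Arguments. Unset Strict Implicit. Unset Printing Implicit Defensive.
Import Order.TTheory GRing.Theory Num.Theory.
Local Open Scope ring_scope.

Notation Mn n := 'M[algC]_n.

(* Positive semidefinite: Hermitian with nonnegative quadratic form
   (on algC, "0 <= z" means z is a nonnegative real). *)
Definition psd (m : nat) (A : 'M[algC]_m) : Prop :=
  A \is hermsymmx /\ forall x : 'cV[algC]_m, 0 <= ((map_mx Num.conj x)^T *m A *m x) 0 0.

(* M_k (x) M_n is identified with 'M_(k*n), the index (a,i) (a : 'I_k the
   outer index, i : 'I_n the inner one) being mxvec_index a i. *)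
Definition pr_idx (k n : nat) (p : 'I_(k * n)) : 'I_k * 'I_n :=
  enum_val (cast_ord (esym (mxvec_cast k n)) p).

Definition blk (k n : nat) (X : 'M[algC]_(k * n)) (a b : 'I_k) : Mn n :=
  \matrix_(i, j) X (mxvec_index a i) (mxvec_index b j).

Definition ampl (k n : nat) (Phi : Mn n -> Mn n) (X : 'M[algC]_(k * n))
  : 'M[algC]_(k * n) :=
  \matrix_(p, q) Phi (blk X (pr_idx p).1 (pr_idx q).1) (pr_idx p).2 (pr_idx q).2.

Definition CP (n : nat) (Phi : Mn n -> Mn n) : Prop :=
  linear Phi /\
  forall (k : nat) (X : 'M[algC]_(k * n)), psd X -> psd (ampl Phi X).

(* E = sum_{i,j} e_i e_j^H (x) e_i e_j^H in M_n (x) M_n *)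
Definition Emax (n : nat) : 'M[algC]_(n * n) :=
  \matrix_(p, q) (((pr_idx p).1 == (pr_idx p).2)
                  && ((pr_idx q).1 == (pr_idx q).2))%:R.

Definition choi (n : nat) (Phi : Mn n -> Mn n) : 'M[algC]_(n * n) :=
  ampl Phi (Emax n).

(* Phi^dagger: the map with Tr(Phi(X) Y) = Tr(X Phi^dagger(Y));
   explicitly (Phi^dagger Y)_{ij} = Tr(Phi(E_ji) Y), E_ji = e_j e_i^H. *)
Definition dagger (n : nat) (Phi : Mn n -> Mn n) : Mn n -> Mn n :=
  fun Y => \matrix_(i, j) \tr (Phi (delta_mx j i) *m Y).

Definition dual_cone (n : nat) (C : (Mn n -> Mn n) -> Prop) (Psi : Mn n -> Mn n)
  : Prop :=
  linear Psi /\ forall Phi, C Phi -> 0 <= \tr (choi Phi *m choi Psi).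

Definition convex_cone (n : nat) (C : (Mn n -> Mn n) -> Prop) : Prop :=
  (forall Phi, C Phi -> linear Phi) /\
  (forall Phi1 Phi2, C Phi1 -> C Phi2 -> C (fun X => Phi1 X + Phi2 X)) /\
  (forall (c : algC) Phi, 0 <= c -> C Phi -> C (fun X => c *: Phi X)).

Definition right_CP_invariant (n : nat) (C : (Mn n -> Mn n) -> Prop) : Prop :=
  forall Omega Psi, C Omega -> CP Psi -> C (Omega \o Psi).

Lemma daggerP (n : nat) (Phi : Mn n -> Mn n) : linear Phi ->
  forall X Y : Mn n, \tr (Phi X *m Y) = \tr (X *m dagger Phi Y).
Proof.
move=> lf X Y.
have P0 : Phi 0 = 0.
  by have := lf (-1) 0 0; rewrite scaler0 addr0 scaleN1r addNr.
have PD : {morph Phi : u v / u + v}.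
  by move=> u v; have := lf 1 u v; rewrite !scale1r.
have PZ : forall a u, Phi (a *: u) = a *: Phi u.
  by move=> a u; have := lf a u 0; rewrite !addr0 P0 addr0.
rewrite [X in Phi X]matrix_sum_delta (big_morph Phi PD P0).
under eq_bigr => i _ do rewrite (big_morph Phi PD P0).
rewrite mulmx_suml raddf_sum /mxtrace.
apply: eq_bigr => i _; rewrite mulmx_suml raddf_sum mxE.
apply: eq_bigr => j _; rewrite PZ -scalemxAl /dagger mxE; exact: mxtraceZ.
Qed.

(* The proof rests on three facts about Choi matrices.
   (1) Trace pairing: Tr(C_Phi C_Psi) = <omega, C_(Psi^dagger o Phi) omega>,
       where omega = sum_i e_i (x) e_i, so that E = omega omega^*.
   (2) Choi's theorem: Theta is CP iff C_Theta is positive semidefinite.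
       Necessity is E >= 0; sufficiency writes a psd X as a nonnegative
       combination of rank-one projectors y y^* and computes
       <x, (id (x) Theta)(u v^* ) x'> = <z, C_Theta z'> for explicit z, z'.
   (3) Every vector t arises from omega through a conjugation map
       Ad_B : X |-> B X B^*, which is CP:
       <omega, C_(Theta o Ad_B) omega> = <t, C_Theta t>.
   Forward direction: (1) and necessity in (2).  Backward direction: for
   Phi in C and any t, pick B from (3); then Phi o Ad_B is in C, and (1)
   turns the dual-cone inequality for it into <t, C_(Psi^dagger o Phi) t> >= 0,
   so sufficiency in (2) concludes. *)
From HB Require Import structures.
From mathcomp Require Import all_boot all_order all_algebra algC ring.
Import Order.TTheory GRing.Theory Num.Theory.
Local Open Scope ring_scope.
Set Implicit Arguments. Unset Strict Implicit. Unset Printing Implicit Defensive.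

Section LinearMap.
Variables (n : nat) (Phi : Mn n -> Mn n).
Hypothesis Phi_lin : linear Phi.

Lemma lin0 : Phi 0 = 0.
Proof. by have := Phi_lin (-1) 0 0; rewrite scaler0 addr0 scaleN1r addNr. Qed.

Lemma linD : {morph Phi : u v / u + v}.
Proof. by move=> u v; have := Phi_lin 1 u v; rewrite !scale1r. Qed.

Lemma linZ a u : Phi (a *: u) = a *: Phi u.
Proof. by have := Phi_lin a u 0; rewrite !addr0 lin0 addr0. Qed.

Lemma lin_sum (I : finType) (F : I -> Mn n) :
  Phi (\sum_i F i) = \sum_i Phi (F i).
Proof. exact: (big_morph Phi linD lin0). Qed.

Lemma lin_expand X : Phi X = \sum_p \sum_q X p q *: Phi (delta_mx p q).
Proof.
rewrite [X in Phi X]matrix_sum_delta lin_sum; apply: eq_bigr => p _.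
by rewrite lin_sum; apply: eq_bigr => q _; rewrite linZ.
Qed.

End LinearMap.

Lemma pr_idxK k n (a : 'I_k) (i : 'I_n) : pr_idx (mxvec_index a i) = (a, i).
Proof. by rewrite /pr_idx /mxvec_index cast_ordK enum_rankK. Qed.

Lemma big_mxvec_index (R : nmodType) k n (F : 'I_(k * n) -> R) :
  \sum_p F p = \sum_a \sum_i F (mxvec_index a i).
Proof.
rewrite pair_bigA /= (reindex (fun ai : 'I_k * 'I_n => mxvec_index ai.1 ai.2)) //=.
exists (fun p => pr_idx p) => [[a i] _ | p _] /=; first by rewrite pr_idxK.
by case/mxvec_indexP: p => a i; rewrite pr_idxK.
Qed.

Lemma exchange_big_pairs (R : nmodType) (I J : finType)
    (F : I -> I -> J -> J -> R) :
  \sum_a \sum_b \sum_p \sum_q F a b p q = \sum_p \sum_q \sum_a \sum_b F a b p q.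
Proof.
rewrite pair_bigA [RHS]pair_bigA /=.
under eq_bigr => ab _ do rewrite pair_bigA.
under [RHS]eq_bigr => pq _ do rewrite pair_bigA.
exact: exchange_big.
Qed.

Definition vblk k n (x : 'cV[algC]_(k * n)) (a : 'I_k) : 'cV[algC]_n :=
  \col_i x (mxvec_index a i) 0.

Definition vcat k n (f : 'I_k -> 'cV[algC]_n) : 'cV[algC]_(k * n) :=
  \col_t f (pr_idx t).1 (pr_idx t).2 0.

Lemma vblk_vcat k n (f : 'I_k -> 'cV[algC]_n) a : vblk (vcat f) a = f a.
Proof. by apply/matrixP => i j; rewrite !mxE pr_idxK ord1. Qed.

Lemma vcatE k n (f : 'I_k -> 'cV[algC]_n) a i : vcat f (mxvec_index a i) 0 = f a i 0.
Proof. by rewrite mxE pr_idxK. Qed.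

Lemma eq_vcat k n (f g : 'I_k -> 'cV[algC]_n) : f =1 g -> vcat f = vcat g.
Proof. by move=> eq_fg; apply/matrixP => s z; rewrite !mxE eq_fg. Qed.

Lemma vcat_vblk k n (x : 'cV[algC]_(k * n)) : vcat (vblk x) = x.
Proof.
apply/matrixP => s z; rewrite ord1; case/mxvec_indexP: s => a i.
by rewrite vcatE mxE.
Qed.

Definition omega n : 'cV[algC]_(n * n) := vcat (fun a => delta_mx a 0).

Lemma blk_inj k n (X Y : 'M[algC]_(k * n)) :
  (forall a b, blk X a b = blk Y a b) -> X = Y.
Proof.
move=> eqXY; apply/matrixP => p q.
case/mxvec_indexP: p => a i; case/mxvec_indexP: q => b j.
by have /matrixP/(_ i j) := eqXY a b; rewrite !mxE.
Qed.

Lemma blk_ampl k n (Phi : Mn n -> Mn n) (X : 'M_(k * n)) a b :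
  blk (ampl Phi X) a b = Phi (blk X a b).
Proof. by apply/matrixP => i j; rewrite !mxE !pr_idxK. Qed.

Lemma ampl_comp k n (Theta Phi : Mn n -> Mn n) (X : 'M_(k * n)) :
  ampl (Theta \o Phi) X = ampl Theta (ampl Phi X).
Proof. by apply/matrixP => p q; rewrite [RHS]mxE blk_ampl mxE. Qed.

Lemma ampl_sum k n (Phi : Mn n -> Mn n) (I : finType) (c : I -> algC)
    (Y : I -> 'M[algC]_(k * n)) : linear Phi ->
  ampl Phi (\sum_r c r *: Y r) = \sum_r c r *: ampl Phi (Y r).
Proof.
move=> Phi_lin; apply: blk_inj => a b.
have blk_sum Z : blk (\sum_r c r *: Z r) a b = \sum_r c r *: blk (Z r) a b.
  by apply/matrixP => i j; rewrite !mxE !summxE; apply: eq_bigr => r _; rewrite !mxE.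
rewrite blk_ampl blk_sum (lin_sum Phi_lin) blk_sum; apply: eq_bigr => r _.
by rewrite (linZ Phi_lin) blk_ampl.
Qed.

Lemma blk_Emax n (p q : 'I_n) : blk (Emax n) p q = delta_mx p q.
Proof. by apply/matrixP => i j; rewrite !mxE !pr_idxK /= eq_sym [q == _]eq_sym. Qed.

Lemma blk_choi n (Phi : Mn n -> Mn n) p q : blk (choi Phi) p q = Phi (delta_mx p q).
Proof. by rewrite blk_ampl blk_Emax. Qed.

Definition adjv m (x : 'cV[algC]_m) : 'rV[algC]_m := (map_mx Num.conj x)^T.

Definition sesq m (A : 'M[algC]_m) (x y : 'cV[algC]_m) : algC :=
  (adjv x *m A *m y) 0 0.

Section Sesquilinear.
Variables (m : nat) (A : 'M[algC]_m).

Lemma sesqE x y : sesq A x y = \sum_p \sum_q (x p 0)^* * A p q * y q 0.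
Proof.
rewrite /sesq mxE; under eq_bigr => q _ do rewrite mxE big_distrl /=.
by rewrite exchange_big; apply: eq_bigr => p _; apply: eq_bigr => q _; rewrite !mxE.
Qed.

Lemma sesqDl x y z : sesq A (x + y) z = sesq A x z + sesq A y z.
Proof. by rewrite /sesq /adjv map_mxD linearD /= !mulmxDl mxE. Qed.

Lemma sesqDr x y z : sesq A z (x + y) = sesq A z x + sesq A z y.
Proof. by rewrite /sesq mulmxDr mxE. Qed.

Lemma sesqZl c x z : sesq A (c *: x) z = c^* * sesq A x z.
Proof. by rewrite /sesq /adjv map_mxZ linearZ /= -!scalemxAl mxE. Qed.

Lemma sesqZr c x z : sesq A z (c *: x) = c * sesq A z x.
Proof. by rewrite /sesq -scalemxAr mxE. Qed.

Lemma sesq_suml (I : finType) (c : I -> algC) (u : I -> 'cV_m) y :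
  sesq A (\sum_i c i *: u i) y = \sum_i (c i)^* * sesq A (u i) y.
Proof.
have sesq0 : sesq A 0 y = 0 by rewrite /sesq /adjv map_mx0 trmx0 !mul0mx mxE.
rewrite (big_morph (fun x => sesq A x y) (fun x z => sesqDl x z y) sesq0).
by apply: eq_bigr => i _; rewrite sesqZl.
Qed.

Lemma sesq_sumr (I : finType) (c : I -> algC) (u : I -> 'cV_m) x :
  sesq A x (\sum_i c i *: u i) = \sum_i c i * sesq A x (u i).
Proof.
have sesq0 : sesq A x 0 = 0 by rewrite /sesq mulmx0 mxE.
rewrite (big_morph (sesq A x) (fun y z => sesqDr y z x) sesq0).
by apply: eq_bigr => i _; rewrite sesqZr.
Qed.

Lemma sesq_delta i j : sesq A (delta_mx i 0) (delta_mx j 0) = A i j.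
Proof.
rewrite sesqE (bigD1 i) //= [X in _ + X]big1 => [|p pi]; last first.
  by apply: big1 => q _; rewrite mxE (negbTE pi) /= rmorph0 !mul0r.
rewrite addr0 (bigD1 j) //= [X in _ + X]big1 => [|q qj]; last first.
  by rewrite [delta_mx j 0 q 0]mxE (negbTE qj) mulr0.
by rewrite !mxE !eqxx /= rmorph1 mul1r mulr1 addr0.
Qed.

End Sesquilinear.

Lemma sesq_sumM m (I : finType) (A : I -> 'M[algC]_m) x y :
  sesq (\sum_i A i) x y = \sum_i sesq (A i) x y.
Proof. by rewrite /sesq mulmx_sumr mulmx_suml summxE. Qed.

Lemma sesqZM m c (A : 'M[algC]_m) x y : sesq (c *: A) x y = c * sesq A x y.
Proof. by rewrite /sesq -scalemxAr -scalemxAl mxE. Qed.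

Lemma sesq_blk k n (X : 'M[algC]_(k * n)) x y :
  sesq X x y = \sum_a \sum_b sesq (blk X a b) (vblk x a) (vblk y b).
Proof.
rewrite sesqE big_mxvec_index; apply: eq_bigr => a _.
under eq_bigr => i _ do rewrite big_mxvec_index.
rewrite exchange_big /=; apply: eq_bigr => b _.
by rewrite sesqE; apply: eq_bigr => i _; apply: eq_bigr => j _; rewrite !mxE.
Qed.

(* Over C, a nonnegative quadratic form is automatically hermitian
   (polarization with the vectors e_i + e_j and e_i + i e_j). *)
Lemma psd_herm m (A : 'M[algC]_m) :
  (forall x, 0 <= sesq A x x) -> A \is hermsymmx.
Proof.
move=> A_nneg; apply/is_hermitianmxP; rewrite expr0 scale1r.
apply/matrixP => i j; rewrite !mxE.
have real_form x : (sesq A x x)^* = sesq A x x by apply/CrealP/ger0_real.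
pose ei := delta_mx i 0 : 'cV[algC]_m; pose ej := delta_mx j 0 : 'cV[algC]_m.
have polar c : sesq A (ei + c *: ej) (ei + c *: ej) =
    A i i + c^* * c * A j j + c * A i j + c^* * A j i.
  by rewrite !(sesqDl, sesqDr, sesqZl, sesqZr) !sesq_delta mulrA; ring.
have R1 := real_form (ei + 1 *: ej); have R2 := real_form (ei + 'i *: ej).
have Ri := real_form ei; have Rj := real_form ej.
rewrite sesq_delta in Ri; rewrite sesq_delta in Rj.
rewrite !polar !rmorphD /= !rmorphM /= !conjCK conjCi !Ri !Rj rmorph1 in R1 R2.
have K1 : 'i * - 'i = 1 :> algC by rewrite mulrN -expr2 sqrCi opprK.
have K2 : - 'i * 'i = 1 :> algC by rewrite mulNr -expr2 sqrCi opprK.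
rewrite K1 K2 !mul1r in R2; rewrite !mul1r in R1.
move: R1 R2; set a := A i j; set b := A j i; set u := A i i; set v := A j j.
move=> R1 R2.
have h1 : a^* + b^* - (a + b) = 0.
  by rewrite -(subrr (u + v + a + b)) -{1}R1; ring.
have h2 : 'i * (b^* - a^* - (a - b)) = 0.
  by rewrite -(subrr (u + v + 'i * a + - 'i * b)) -{1}R2; ring.
move/eqP: h2; rewrite mulf_eq0 (negbTE (neq0Ci _)) /= => /eqP h2.
have : (b^* - a) * 2 = 0 by rewrite -[RHS](addr0 0) -{1}h1 -h2; ring.
by move/eqP; rewrite mulf_eq0 pnatr_eq0 orbF subr_eq0 => /eqP.
Qed.

Lemma psdP m (A : 'M[algC]_m) : psd A <-> (forall x, 0 <= sesq A x x).
Proof. by split=> [[_ A_nneg] //|A_nneg]; split; [exact: psd_herm|]. Qed.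

Lemma sesq_rank1 m (u v x y : 'cV[algC]_m) :
  sesq (u *m adjv v) x y = (sesq 1%:M u x)^* * sesq 1%:M v y.
Proof.
rewrite /sesq !mulmx1 !mulmxA -[_ *m y]mulmxA [LHS]mxE big_ord1.
congr (_ * _); rewrite !mxE rmorph_sum; apply: eq_bigr => p _.
by rewrite !mxE rmorphM /= conjCK mulrC.
Qed.

Lemma psd_rank1 m (u : 'cV[algC]_m) : psd (u *m adjv u).
Proof. by apply/psdP => x; rewrite sesq_rank1 mulrC mul_conjC_ge0. Qed.

(* Spectral theorem: a psd matrix is a nonnegative combination of rank-one
   projectors y y^*. *)
Lemma psd_decomp m (X : 'M[algC]_m) : psd X ->
  exists (d : 'I_m -> algC) (y : 'I_m -> 'cV[algC]_m), (forall r, 0 <= d r) /\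
    X = \sum_r d r *: (y r *m adjv (y r)).
Proof.
move=> X_psd; have [X_herm _] := X_psd.
pose P := spectralmx X; pose D := spectral_diag X.
pose Q := map_mx Num.conj P^T.
have PQ : P *m Q = 1%:M by apply/unitarymxP/spectral_unitarymx.
have XE : X = Q *m diag_mx D *m P.
  have /orthomx_spectralP XE := hermitian_normalmx X_herm.
  by rewrite {1}XE -/P -/D invmx_unitary ?spectral_unitarymx.
exists (fun r => D 0 r), (fun r => col r Q); split; last first.
  apply/matrixP => p q; rewrite {1}XE summxE mxE; apply: eq_bigr => r _.
  rewrite mul_mx_diag !mxE big_ord1 !mxE conjCK; ring.
move=> r; have /psdP/(_ (col r Q)) := X_psd.
suff -> : sesq X (col r Q) (col r Q) = D 0 r by [].
rewrite /sesq /adjv map_col /Q -map_mx_comp map_mx_id => [|z]; last by rewrite /= conjCK.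
rewrite tr_col trmxK -row_mul.
have -> : (row r (P *m X) *m col r Q) 0 0 = (P *m X *m Q) r r.
  by rewrite !mxE; apply: eq_bigr => k _; rewrite !mxE.
by rewrite XE !mulmxA PQ mul1mx -!mulmxA PQ mulmx1 mxE eqxx mulr1n.
Qed.

Lemma rank1E m (u v : 'cV[algC]_m) p q : (u *m adjv v) p q = u p 0 * (v q 0)^*.
Proof. by rewrite mxE big_ord1 !mxE. Qed.

Lemma blk_rank1 k n (u v : 'cV[algC]_(k * n)) a b :
  blk (u *m adjv v) a b = vblk u a *m adjv (vblk v b).
Proof. by apply/matrixP => i j; rewrite mxE !rank1E !mxE. Qed.

Lemma lin_rank1 n (Phi : Mn n -> Mn n) (u v : 'cV[algC]_n) : linear Phi ->
  Phi (u *m adjv v) = \sum_p \sum_q (u p 0 * (v q 0)^*) *: Phi (delta_mx p q).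
Proof.
move=> Phi_lin; rewrite (lin_expand Phi_lin); apply: eq_bigr => p _.
by apply: eq_bigr => q _; rewrite rank1E.
Qed.

Definition contract k n (u x : 'cV[algC]_(k * n)) : 'cV[algC]_(n * n) :=
  vcat (fun p => \sum_a (u (mxvec_index a p) 0)^* *: vblk x a).

Lemma sesq_ampl_rank1 k n (Phi : Mn n -> Mn n) (u v x y : 'cV[algC]_(k * n)) :
  linear Phi ->
  sesq (ampl Phi (u *m adjv v)) x y = sesq (choi Phi) (contract u x) (contract v y).
Proof.
move=> Phi_lin; rewrite sesq_blk [RHS]sesq_blk.
under eq_bigr => a _ do under eq_bigr => b _ do
  rewrite blk_ampl blk_rank1 (lin_rank1 _ _ Phi_lin) sesq_sumM.
under eq_bigr => a _ do under eq_bigr => b _ do under eq_bigr => p _ do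
  rewrite sesq_sumM.
rewrite exchange_big_pairs; apply: eq_bigr => p _; apply: eq_bigr => q _.
rewrite blk_choi !vblk_vcat sesq_suml; apply: eq_bigr => a _.
rewrite sesq_sumr big_distrr; apply: eq_bigr => b _ /=.
rewrite sesqZM !mxE conjCK; ring.
Qed.

Lemma Emax_rank1 n : Emax n = omega n *m adjv (omega n).
Proof.
apply: blk_inj => a b; rewrite blk_Emax blk_rank1 !vblk_vcat.
by apply/matrixP => i j; rewrite rank1E !mxE eqxx !andbT rmorph_nat -natrM mulnb.
Qed.

Lemma CP_choi_psd n (Phi : Mn n -> Mn n) : CP Phi -> psd (choi Phi).
Proof. by case=> _ Phi_CP; apply: Phi_CP; rewrite Emax_rank1; exact: psd_rank1. Qed.

Lemma choi_CP n (Phi : Mn n -> Mn n) : linear Phi -> psd (choi Phi) -> CP Phi.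
Proof.
move=> Phi_lin /psdP choi_nneg; split=> // k X /psd_decomp [d [y [d_ge0 ->]]].
apply/psdP => x; rewrite ampl_sum // sesq_sumM; apply: sumr_ge0 => r _.
by rewrite sesqZM sesq_ampl_rank1 // mulr_ge0.
Qed.

Definition conjmap n (B : Mn n) : Mn n -> Mn n :=
  fun X => B *m X *m map_mx Num.conj B^T.

Lemma conjmap_lin n (B : Mn n) : linear (conjmap B).
Proof. by move=> a X Y; rewrite /conjmap mulmxDr mulmxDl -scalemxAr -scalemxAl. Qed.

Lemma adjv_mul n (B : Mn n) w : adjv (B *m w) = adjv w *m map_mx Num.conj B^T.
Proof. by rewrite /adjv map_mxM trmx_mul -map_trmx. Qed.

Definition vmap k n (B : Mn n) (u : 'cV[algC]_(k * n)) : 'cV[algC]_(k * n) :=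
  vcat (fun a => B *m vblk u a).

Lemma ampl_conjmap_rank1 k n (B : Mn n) (u v : 'cV[algC]_(k * n)) :
  ampl (conjmap B) (u *m adjv v) = vmap B u *m adjv (vmap B v).
Proof.
apply: blk_inj => a b.
by rewrite blk_ampl !blk_rank1 !vblk_vcat /conjmap adjv_mul !mulmxA.
Qed.

(* Ad_B is CP: its Choi matrix is the rank-one projector on (I (x) B) omega. *)
Lemma conjmap_CP n (B : Mn n) : CP (conjmap B).
Proof.
apply: choi_CP; first exact: conjmap_lin.
by rewrite /choi Emax_rank1 ampl_conjmap_rank1; exact: psd_rank1.
Qed.

Lemma trace_blk k n (X Y : 'M[algC]_(k * n)) :
  \tr (X *m Y) = \sum_a \sum_b \tr (blk X a b *m blk Y b a).
Proof.
rewrite /mxtrace big_mxvec_index; apply: eq_bigr => a _.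
under eq_bigr => i _ do rewrite mxE big_mxvec_index.
rewrite exchange_big; apply: eq_bigr => b _.
by apply: eq_bigr => i _; rewrite mxE; apply: eq_bigr => j _; rewrite !mxE.
Qed.

Lemma tr_choi n (Phi Psi : Mn n -> Mn n) :
  \tr (choi Phi *m choi Psi) = sesq (choi (dagger Psi \o Phi)) (omega n) (omega n).
Proof.
rewrite trace_blk sesq_blk; apply: eq_bigr => a _; apply: eq_bigr => b _.
by rewrite !blk_choi !vblk_vcat sesq_delta /= mxE mxtrace_mulC.
Qed.

(* B_(p,a) = conj t_(p,a): with this B, contracting (I (x) B) omega against
   omega gives back t. *)
Definition conj_reshape n (t : 'cV[algC]_(n * n)) : Mn n :=
  \matrix_(p, a) (t (mxvec_index p a) 0)^*.

Lemma contract_conj_reshape n (t : 'cV[algC]_(n * n)) :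
  contract (vmap (conj_reshape t) (omega n)) (omega n) = t.
Proof.
rewrite /contract -[RHS]vcat_vblk; apply: eq_vcat => p.
rewrite [RHS]matrix_sum_delta; apply: eq_bigr => a _.
by rewrite big_ord1 vcatE vblk_vcat -colE !mxE conjCK.
Qed.

Lemma sesq_choi_conjmap n (Theta : Mn n -> Mn n) (t : 'cV[algC]_(n * n)) :
  linear Theta ->
  sesq (choi (Theta \o conjmap (conj_reshape t))) (omega n) (omega n) =
  sesq (choi Theta) t t.
Proof.
move=> Theta_lin; rewrite /choi ampl_comp Emax_rank1 ampl_conjmap_rank1.
by rewrite sesq_ampl_rank1 // !contract_conj_reshape -Emax_rank1.
Qed.

Lemma dagger_lin n (Psi : Mn n -> Mn n) : linear (dagger Psi).
Proof.
move=> a X Y; apply/matrixP => i j.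
by rewrite !mxE mulmxDr -scalemxAr mxtraceD mxtraceZ.
Qed.

Theorem proposition4p1 (n : nat) (C : (Mn n -> Mn n) -> Prop)
  (HC : convex_cone C) (HCP : right_CP_invariant C)
  (Psi : Mn n -> Mn n) (HPsi : linear Psi) :
  (forall Phi, C Phi -> CP (dagger Psi \o Phi)) <-> dual_cone C Psi.
Proof.
split=> [dagger_CP | [_ dual] Phi CPhi].
  split=> // Phi CPhi; rewrite tr_choi.
  by have /psdP := CP_choi_psd (dagger_CP Phi CPhi); apply.
have Theta_lin : linear (dagger Psi \o Phi).
  by move=> a X Y /=; rewrite (HC.1 Phi CPhi) dagger_lin.
apply: choi_CP => //; apply/psdP => t.
rewrite -sesq_choi_conjmap // -tr_choi.
exact: dual _ (HCP _ _ CPhi (conjmap_CP _)).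
Qed.
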